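(* Let $V_\theta$ be a real vector space of dimension $2$, and let $M\subset V_\theta\times[0,1]$ be a dichotomous item response hypersurface (IRHS), with associated function $f:V_\theta\to[0,1]$ (so $M=\{(\theta,f(\theta)):\theta\in V_\theta\}$). Then the MIRT model given by $M$ is a trivial extension of a unidimensional IRT model: there exist nonzero vectors $u,v\in V_\theta$, linearly independent, such that $$f(\mu u+\lambda v)=f(\mu u)\quad\text{for all }\mu,\lambda\in\mathbb{R},$$ so that $f$ is determined by the monotonic function $\mu\mapsto f(\mu u)$, $\mathbb{R}\to[0,1]$.
   Context: A dichotomous item response hypersurface (IRHS) is a $D=\dim V_\theta$ dimensional smooth submanifold $M$ of $V_\theta\times[0,1]$ such that for any two vectors $v,w\in V_\theta$, the intersection of $(w+\mathbb{R}\cdot v)\times[0,1]$ with $M$ is the graph of a monotonic function $w+\mathbb{R}\cdot v\to[0,1]$, where $w+\mathbb{R}\cdot v=\{w+\lambda v:\lambda\in\mathbb{R}\}$. A function $g:w+\mathbb{R}\cdot v\to[0,1]$ is called monotonic if either $g(w+\lambda v)\le g(w+\mu v)$ for all $\lambda\le\mu$, or $g(w+\lambda v)\ge g(w+\mu v)$ for all $\lambda\le\mu$. (Taking $v=0$ shows that $M$ is the graph of a function $f:V_\theta\to[0,1]$.) A MIRT model is given by an IRHS; a unidimensional IRT model is a monotonic function $\mathbb{R}\to[0,1]$. *)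

(* V_theta is modelled as 'rV[R]_2 (R : realType). *)
From HB Require Import structures.
From mathcomp Require Import all_boot all_order all_algebra.
From mathcomp Require Import all_classical all_reals all_analysis.
Set Implicit Arguments. Unset Strict Implicit. Unset Printing Implicit Defensive.
Import Order.TTheory GRing.Theory Num.Theory.
Import numFieldNormedType.Exports.
Local Open Scope classical_set_scope.
Local Open Scope ring_scope.

Section IRHS.
Variable R : realType.

Definition e2 (i : 'I_2) : 'rV[R]_2 := delta_mx 0 i.

Fixpoint Cn (n : nat) (g : 'rV[R]_2 -> R) : Prop :=
  match n with
  | 0 => continuous g
  | n.+1 => continuous g /\
      forall i : 'I_2, (forall x, derivable g x (e2 i)) /\
                       Cn n (fun x => 'D_(e2 i) g x)
  end.

Definition smooth2 (g : 'rV[R]_2 -> R) : Prop := forall n, Cn n g.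

(* the point (theta, t) of V_theta x R viewed in R^3 *)
Definition emb (p : 'rV[R]_2 * R) : 'rV[R]_3 := row_mx p.1 (p.2)%:M.

(* M is a 2-dimensional (codimension 1) embedded smooth submanifold of
   V_theta x R = R^3: locally M is the graph of a smooth function of two of
   the three coordinates. *)
Definition smooth_hypersurface (M : set ('rV[R]_2 * R)) : Prop :=
  forall p, M p -> exists (U : set 'rV[R]_3) (k : 'I_3) (g : 'rV[R]_2 -> R),
    [/\ open U, U (emb p), smooth2 g &
        forall q, U (emb q) -> (M q <-> (emb q) 0 k = g (col' k (emb q)))].

Definition line (w v : 'rV[R]_2) : set 'rV[R]_2 :=
  [set x | exists lam : R, x = w + lam *: v].

Definition monotonic_on_line (g : 'rV[R]_2 -> R) (w v : 'rV[R]_2) : Prop :=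
  (forall lam mu : R, lam <= mu -> g (w + lam *: v) <= g (w + mu *: v)) \/
  (forall lam mu : R, lam <= mu -> g (w + lam *: v) >= g (w + mu *: v)).

Definition IRHS (M : set ('rV[R]_2 * R)) : Prop :=
  [/\ (forall p, M p -> 0 <= p.2 <= 1),
      smooth_hypersurface M &
      forall w v : 'rV[R]_2, exists g : 'rV[R]_2 -> R,
        [/\ monotonic_on_line g w v,
            (forall x, line w v x -> 0 <= g x <= 1) &
            [set p | M p /\ line w v p.1] = [set (x, g x) | x in line w v]]].

Definition graph (f : 'rV[R]_2 -> R) : set ('rV[R]_2 * R) :=
  [set (x, f x) | x in [set: 'rV[R]_2]].

End IRHS.

(* Continuity: near each of its points M is the zero set of a continuous
   function H of (y, t).  If the chart is a graph over the V_theta-plane,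
   H y t = t - g y; otherwise translating y along a coordinate axis shifts H by
   a constant, and since M meets each vertical line exactly once this forces
   H x to change sign across f x.  A sign change that persists for y near x
   then traps f y near f x by the intermediate value theorem.

   Geometry: f is continuous and monotone on every line, so its sublevel sets
   are closed and convex along lines.  Hence no direction d can make f
   increase somewhere and strictly decrease elsewhere, and for every d, f is
   nonincreasing along d or along -d everywhere.  Following the directions
   from e_0 to +-e_1, the last one along which f is nonincreasing is a
   direction along which f is also nondecreasing, so f is constant along it. *)
From HB Require Import structures.
From mathcomp Require Import all_boot all_order all_algebra.
From mathcomp Require Import all_classical all_reals all_analysis.
From mathcomp Require Import ring lra.
Import Order.TTheory GRing.Theory Num.Theory.
Import numFieldNormedType.Exports.
Set Implicit Arguments. Unset Strict Implicit. Unset Printing Implicit Defensive.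
Local Open Scope classical_set_scope.
Local Open Scope ring_scope.

Section ZeroSet.
Variable R : realType.

Lemma continuous_rowP {T : topologicalType} n (h : T -> 'rV[R]_n) :
  (forall j, continuous (fun z => h z 0 j)) -> continuous h.
Proof.
move=> hc x; apply/cvg_ballP => e e0.
apply: filterS (filter_forall _ (fun j => cvg_ball (hc j x) e0)) => z hz; split => // i j.
by rewrite ord1; apply: hz.
Qed.

Lemma IVT_sign_change (h : R -> R) (a b : R) : continuous h -> a <= b ->
  h a * h b <= 0 -> exists2 c, a <= c <= b & h c = 0.
Proof.
move=> hc ab hab.
have [ha0|ha0] := eqVneq (h a) 0; first by exists a; rewrite ?lexx.
have hw : {within `[a, b], continuous h} by exact: continuous_subspaceT.
have [|c] := @IVT R h a b 0 ab hw; last by rewrite in_itv /= => cab hc0; exists c.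
rewrite ge_min le_max; case: (ltgtP (h a) 0) ha0 => // ha _.
- by rewrite /= -(nmulr_rle0 _ ha) hab.
- by rewrite /= -(pmulr_rle0 _ ha) hab.
Qed.

Definition cuts_out_graph {T : topologicalType} (f : T -> R) (H : T -> R -> R)
    (x : T) (r : R) :=
  \forall y \near x, forall t, `|f x - t| < r -> (t = f y <-> H y t = 0).

Lemma cuts_out_graph_at {T : topologicalType} (f : T -> R) H x r :
  0 < r -> cuts_out_graph f H x r -> H x (f x) = 0.
Proof.
by move=> r0 /nbhs_singleton /(_ (f x)); rewrite subrr normr0 => /(_ r0) [+ _]; apply.
Qed.

Lemma cuts_out_graphN {T : topologicalType} (f : T -> R) H x r :
  cuts_out_graph f H x r -> cuts_out_graph f (fun y t => - H y t) x r.
Proof.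
apply: filterS => y hy t /hy ->.
by split=> [->|/eqP]; rewrite ?oppr0 // oppr_eq0 => /eqP.
Qed.

(* Moving x to y := x - b *: v lowers H by b, so H y is negative at f x but
   still positive at f x -+ eta; it vanishes on both sides of f x, and both
   zeros have to be f y. *)
Lemma translation_no_common_sign {V : normedModType R} (f : V -> R) H x r v
    (eta : R) :
  0 < r -> cuts_out_graph f H x r -> (forall y, continuous (H y)) ->
  (forall y a t, H (y + a *: v) t = H y t + a) ->
  0 < eta < r -> ~ (0 < H x (f x - eta) /\ 0 < H x (f x + eta)).
Proof.
move=> r0 cut Hc Htr /andP [eta0 etar] [Hm Hp].
have Hxc := cuts_out_graph_at r0 cut.
have shift_x : (fun b : R => x - b *: v) @ 0 --> x.
  rewrite -[X in _ --> X]subr0 -(scale0r v).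
  by apply: cvgB; [exact: cvg_cst | exact: scalel_continuous].
near (0 : R)^'+ => b.
have cut_y : forall t, `|f x - t| < r -> (t = f (x - b *: v) <-> H (x - b *: v) t = 0).
  by near: b; apply: cvg_at_right_filter shift_x _ cut.
set y := x - b *: v in cut_y *.
have Hy t : H y t = H x t - b by rewrite /y -scaleNr Htr.
have [t1 /andP [t1l t1r] Ht1] : exists2 t, f x - eta <= t <= f x & H y t = 0.
  apply: IVT_sign_change; first exact: Hc.
    by rewrite lerBlDr lerDl ltW.
  by rewrite !Hy Hxc sub0r mulrN oppr_le0 mulr_ge0 // subr_ge0 ltW //; near: b; apply: nbhs_right_lt.
have [t2 /andP [t2l t2r] Ht2] : exists2 t, f x <= t <= f x + eta & H y t = 0.
  apply: IVT_sign_change; first exact: Hc.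
    by rewrite lerDl ltW.
  by rewrite !Hy Hxc sub0r mulNr oppr_le0 mulr_ge0 // subr_ge0 ltW //; near: b; apply: nbhs_right_lt.
have e1 : t1 = f y by apply/cut_y => //; rewrite ger0_norm ?subr_ge0 //; lra.
have e2 : t2 = f y by apply/cut_y => //; rewrite ler0_norm ?subr_le0 //; lra.
have b0 : 0 < b by near: b; exact: nbhs_right_gt.
have t1c : t1 = f x by lra.
by move: Ht1; rewrite t1c Hy Hxc; lra.
Unshelve. all: end_near.
Qed.

Lemma translation_sign_change {V : normedModType R} (f : V -> R) H x r v
    (eta : R) :
  0 < r -> cuts_out_graph f H x r -> (forall y, continuous (H y)) ->
  (forall y a t, H (y + a *: v) t = H y t + a) ->
  0 < eta < r -> H x (f x - eta) * H x (f x + eta) < 0.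
Proof.
move=> r0 cut Hc Htr /andP [eta0 etar].
have Hnz t : `|f x - t| = eta -> H x t != 0.
  move=> dt; apply/negP => /eqP H0.
  have [_ /(_ H0) ft] := nbhs_singleton cut t (ltac:(by rewrite dt)).
  by move: dt eta0; rewrite ft subrr normr0 => <-; rewrite ltxx.
have nzm : H x (f x - eta) != 0 by apply: Hnz; rewrite opprB addrC subrK gtr0_norm.
have nzp : H x (f x + eta) != 0 by apply: Hnz; rewrite opprD addNKr normrN gtr0_norm.
rewrite ltNge; apply/negP => hge.
have etab : 0 < eta < r by rewrite eta0 etar.
case: (ltgtP (H x (f x - eta)) 0) nzm => // hm _.
- apply: (translation_no_common_sign (H := fun y t => - H y t) (v := - v) r0
    (cuts_out_graphN cut) _ _ etab).
  + by move=> y t; apply: cvgN; apply: Hc.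
  + by move=> y a t; rewrite scalerN -scaleNr Htr opprD opprK.
  rewrite !oppr_gt0; split=> //; rewrite lt_neqAle nzp /= -(nmulr_rge0 _ hm) //.
- apply: (translation_no_common_sign r0 cut Hc Htr etab); split=> //.
  by rewrite lt_def nzp -(pmulr_rge0 _ hm).
Qed.

Lemma continuous_of_sign_change {T : topologicalType} (f : T -> R) H x r :
  0 < r -> cuts_out_graph f H x r -> (forall y, continuous (H y)) ->
  (forall t, {for x, continuous (fun y => H y t)}) ->
  (forall eta, 0 < eta < r -> H x (f x - eta) * H x (f x + eta) < 0) ->
  {for x, continuous f}.
Proof.
move=> r0 cut Hc Hcx sgn; apply/cvgrPdist_lt => e e0.
pose eta := Num.min r e / 2.
have eta0 : 0 < eta by rewrite divr_gt0 // lt_min r0 e0.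
have [etar etae] : eta < r /\ eta < e.
  have mr : Num.min r e <= r by rewrite ge_min lexx.
  have me : Num.min r e <= e by rewrite ge_min lexx orbT.
  by rewrite /eta; lra.
have sgn_near : \forall y \near x, H y (f x - eta) * H y (f x + eta) < 0.
  move/cvgr_lt: (continuousM (Hcx (f x - eta)) (Hcx (f x + eta))); apply.
  by apply: sgn; rewrite eta0 etar.
near=> y.
have [t /andP [t1 t2] Ht] : exists2 t, f x - eta <= t <= f x + eta & H y t = 0.
  apply: IVT_sign_change; [exact: Hc | lra | apply: ltW; near: y; exact: sgn_near].
have cut_y : forall t, `|f x - t| < r -> (t = f y <-> H y t = 0) by near: y.
have dt : `|f x - t| <= eta by rewrite ler_distlC; apply/andP; split.
rewrite -(cut_y t (le_lt_trans dt etar)).2 //.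
exact: le_lt_trans dt etae.
Unshelve. all: end_near.
Qed.

End ZeroSet.

Section Hypersurface.
Variable R : realType.

Lemma emb_coordE (y : 'rV[R]_2) t (k : 'I_3) :
  emb (y, t) 0 k = if @fintype.split 2 1 k is inl j then y 0 j else t.
Proof. by rewrite /emb /row_mx mxE; case: fintype.split => j //=; rewrite mxE ord1 mulr1n. Qed.

Lemma emb_ball (x y : 'rV[R]_2) c t r :
  ball x r y -> ball c r t -> ball (emb (x, c)) r (emb (y, t)).
Proof. by move=> [r0 xy] ct; split=> // i k; rewrite ord1 !emb_coordE; case: fintype.split. Qed.

Lemma emb_continuous_l t : continuous (fun y : 'rV[R]_2 => emb (y, t)).
Proof.
apply: continuous_rowP => k; under eq_fun do rewrite emb_coordE.
by case: fintype.split => j; [exact: coord_continuous | exact: cst_continuous].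
Qed.

Lemma emb_continuous_r (y : 'rV[R]_2) : continuous (fun t : R => emb (y, t)).
Proof.
apply: continuous_rowP => k; under eq_fun do rewrite emb_coordE.
by case: fintype.split => j //; exact: cst_continuous.
Qed.

Lemma col'_continuous n (k : 'I_n.+1) : continuous (col' k : 'rV[R]_n.+1 -> 'rV[R]_n).
Proof.
apply: continuous_rowP => j; under eq_fun do rewrite mxE.
exact: coord_continuous.
Qed.

Lemma emb_lshift (y : 'rV[R]_2) t (j : 'I_2) : emb (y, t) 0 (lshift 1 j) = y 0 j.
Proof. exact: row_mxEl. Qed.

Lemma emb_rshift (y : 'rV[R]_2) t (j : 'I_1) : emb (y, t) 0 (rshift 2 j) = t.
Proof. by rewrite /emb /= (row_mxEr y) mxE ord1 mulr1n. Qed.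

Lemma col'_emb_rshift (y : 'rV[R]_2) t (j : 'I_1) : col' (rshift 2 j) (emb (y, t)) = y.
Proof.
apply/rowP => i; rewrite mxE (_ : lift _ i = lshift 1 i) ?emb_lshift //.
by apply: val_inj; rewrite /= ord1 /bump /=; case: i => [[|[|]]].
Qed.

Lemma col'_emb_translate (y : 'rV[R]_2) t a (j : 'I_2) :
  col' (lshift 1 j) (emb (y + a *: e2 R j, t)) = col' (lshift 1 j) (emb (y, t)).
Proof.
apply/rowP => i; rewrite !mxE.
case: (@split_ordP 2 1 (lift (lshift 1 j) i)) => [j' ij'|//] /=.
have jj' : j' != j by apply: contra (neq_lift (lshift 1 j) i) => /eqP jE; rewrite ij' jE.
by rewrite !mxE (negbTE jj') andbF mulr0 addr0.
Qed.

Lemma emb_translate (y : 'rV[R]_2) t a (j : 'I_2) :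
  emb (y + a *: e2 R j, t) 0 (lshift 1 j) = emb (y, t) 0 (lshift 1 j) + a.
Proof. by rewrite !emb_lshift !mxE !eqxx mulr1. Qed.

Lemma graphE (f : 'rV[R]_2 -> R) q : graph f q <-> q.2 = f q.1.
Proof. by case: q => y t; split=> [[z _ [<- <-]] | /= ->]; last exists y. Qed.

Lemma graph_eq_continuous (g : 'rV[R]_2 -> R) (k : 'I_3) :
  continuous g -> continuous (fun z : 'rV[R]_3 => z 0 k - g (col' k z)).
Proof.
move=> gc z; apply: continuousB; first exact: coord_continuous.
by apply: continuous_comp; [exact: col'_continuous | exact: gc].
Qed.

Lemma smooth_hypersurface_graph_continuous (f : 'rV[R]_2 -> R) :
  smooth_hypersurface (graph f) -> continuous f.
Proof.
move=> hs x; have [U [k [g [oU Ux sg Mg]]]] := hs (x, f x) (ltac:(by exists x)).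
pose phi (z : 'rV[R]_3) := z 0 k - g (col' k z).
have phic : continuous phi := graph_eq_continuous (k := k) (sg 0%N).
pose H y t := phi (emb (y, t)).
have Hc_r y : continuous (H y).
  by move=> t; apply: (@continuous_comp _ _ _ (fun t => emb (y, t)) phi);
    [exact: emb_continuous_r | exact: phic].
have Hc_l t : {for x, continuous (fun y => H y t)}.
  by apply: (@continuous_comp _ _ _ (fun y => emb (y, t)) phi);
    [exact: emb_continuous_l | exact: phic].
have [r r0 rU] : exists2 r, 0 < r & ball (emb (x, f x)) r `<=` U.
  by apply/nbhs_ballP; apply: open_nbhs_nbhs.
have cut : cuts_out_graph f H x r.
  near=> y => t dt.
  have Uyt : U (emb (y, t)).
    by apply: rU; apply: emb_ball => //; near: y; exact: nbhsx_ballx.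
  rewrite -[t = f y]/((y, t).2 = f (y, t).1) -graphE (Mg _ Uyt) /H /phi.
  by split=> [->|/eqP]; rewrite ?subrr // subr_eq0 => /eqP.
apply: (continuous_of_sign_change r0 cut Hc_r Hc_l).
case: (@split_ordP 2 1 k) => j kE.
- move=> eta etab; apply: (translation_sign_change (v := e2 R j) r0 cut Hc_r _ etab).
  by move=> y a t; rewrite /H /phi kE col'_emb_translate emb_translate addrAC.
- have Hk y t : H y t = t - g y by rewrite /H /phi kE emb_rshift col'_emb_rshift.
  have gx : f x = g x.
    by apply/eqP; rewrite -subr_eq0 -Hk; apply/eqP; exact: cuts_out_graph_at r0 cut.
  by move=> eta /andP [eta0 _]; rewrite !Hk -gx; nra.
Unshelve. all: end_near.
Qed.

Lemma IRHS_monotonic (f : 'rV[R]_2 -> R) : IRHS (graph f) ->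
  forall w v, monotonic_on_line f w v.
Proof.
move=> [_ _ lines] w v; have [g [mono _ Mline]] := lines w v.
have gf l : g (w + l *: v) = f (w + l *: v).
  have : [set p | graph f p /\ line w v p.1] (w + l *: v, g (w + l *: v)).
    by rewrite Mline; exists (w + l *: v) => //; exists l.
  by case=> /graphE /= ->.
by case: mono => mono; [left | right] => l m lm; rewrite -!gf mono.
Qed.
End Hypersurface.

Section MonotoneOnLines.
Variable R : realType.

Lemma le_of_approx_le (h : R -> R) l0 m : {for l0, continuous h} ->
  (forall d, 0 < d -> exists2 l, `|l0 - l| < d & h l <= m) -> h l0 <= m.
Proof.
move=> hc approx; rewrite leNgt; apply/negP => mh.
move/cvgr_gt: hc => /(_ m mh) /nbhs_ballP [d d0 dball].
have [l ld hl] := approx d d0.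
by have := dball l ld; rewrite /= ltNge hl.
Qed.

Section QuasiConvexity.
Variable f : 'rV[R]_2 -> R.
Hypothesis f_cont : continuous f.
Hypothesis f_mono : forall w v, monotonic_on_line f w v.

Lemma line_continuous (w v : 'rV[R]_2) : continuous (fun l : R => f (w + l *: v)).
Proof.
move=> l; apply: (@continuous_comp _ _ _ (fun l : R => w + l *: v) f); last exact: f_cont.
by apply: cvgD; [exact: cvg_cst | exact: scalel_continuous].
Qed.

Lemma segment_le (a b : 'rV[R]_2) s m : 0 <= s <= 1 ->
  f a <= m -> f b <= m -> f (a + s *: (b - a)) <= m.
Proof.
move=> /andP [s0 s1] fa fb.
case: (f_mono a (b - a)) => mono.
- by apply: le_trans (mono _ _ s1) _; rewrite scale1r addrC subrK.
- by apply: le_trans (mono _ _ s0) _; rewrite scale0r addr0.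
Qed.

Lemma ray_le (x e z : 'rV[R]_2) m :
  (forall tau, 0 <= tau -> f (x + tau *: e) <= m) -> f z <= m ->
  forall t, 0 <= t -> f (z + t *: e) <= m.
Proof.
(* z + t *: e is the limit, as s -> 0+, of z + s *: (x + (t / s) *: e - z),
   which lies on a segment whose endpoints satisfy f <= m. *)
move=> fx fz t t0.
rewrite -[z + _](addr0) -(scale0r (x - z)).
apply: (le_of_approx_le (h := fun l => f (z + t *: e + l *: (x - z)))).
  exact: line_continuous.
move=> d d0.
pose s := Num.min (d / 2) 1.
have s0 : 0 < s by rewrite lt_min divr_gt0 ?ltr01.
have [sd s1] : s <= d / 2 /\ s <= 1 by rewrite !ge_min !lexx orbT.
exists s; first by rewrite sub0r normrN gtr0_norm //; lra.
have -> : z + t *: e + s *: (x - z) = z + s *: (x + (t / s) *: e - z).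
  by apply/rowP => j; rewrite !mxE; field; rewrite gt_eqF.
by apply: segment_le; [rewrite (ltW s0) s1 | | apply: fx; rewrite divr_ge0 // ltW].
Qed.
End QuasiConvexity.

Lemma monotonic_on_lineN (f : 'rV[R]_2 -> R) w v :
  monotonic_on_line f w v -> monotonic_on_line (fun x => - f x) w v.
Proof. by case=> mono; [right | left] => l m lm; rewrite lerN2 mono. Qed.

Lemma ray_ge (f : 'rV[R]_2 -> R) (x e z : 'rV[R]_2) m :
  continuous f -> (forall w v, monotonic_on_line f w v) ->
  (forall tau, 0 <= tau -> m <= f (x + tau *: e)) -> m <= f z ->
  forall t, 0 <= t -> m <= f (z + t *: e).
Proof.
move=> fc fm fx fz t t0; rewrite -lerN2.
apply: (ray_le (f := fun x => - f x) _ _ (x := x)) => //.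
- by move=> y; exact: (cvgN (fc y)).
- by move=> w v; apply: monotonic_on_lineN.
- by move=> tau tau0; rewrite lerN2; apply: fx.
- by rewrite lerN2.
Qed.

Definition lerp (b0 b1 : 'rV[R]_2) s := (1 - s) *: b0 + s *: b1.

Lemma lerpN b0 b1 s : - lerp b0 b1 s = lerp (- b0) (- b1) s.
Proof. by rewrite /lerp opprD !scalerN. Qed.

Section InvariantDirection.
Variable f : 'rV[R]_2 -> R.
Hypothesis f_cont : continuous f.
Hypothesis f_mono : forall w v, monotonic_on_line f w v.

Definition nonincr_dir (d : 'rV[R]_2) := forall x t, 0 <= t -> f (x + t *: d) <= f x.

Lemma no_ascent_and_descent (d x y : 'rV[R]_2) t s : 0 <= t -> 0 <= s ->
  f x < f (x + t *: d) -> f (y + s *: d) < f y -> False.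
Proof.
move=> t0 s0 up down.
have x_up l m : l <= m -> f (x + l *: d) <= f (x + m *: d).
  case: (f_mono x d) => mono; first exact: mono; move: (mono _ _ t0).
  by rewrite scale0r addr0 leNgt up.
have y_down l m : l <= m -> f (y + m *: d) <= f (y + l *: d).
  case: (f_mono y d) => mono; last exact: mono; move: (mono _ _ s0).
  by rewrite scale0r addr0 leNgt down.
have le_yx : f y <= f x.
  pose M := Num.max (f x) (f (y + s *: d)).
  have ray tau : 0 <= tau -> f (x + tau *: - d) <= M.
    move=> tau0; rewrite le_max; apply/orP; left.
    by move: (x_up (- tau) 0); rewrite scalerN -scaleNr scale0r addr0; apply; rewrite oppr_le0.
  have := ray_le f_cont f_mono ray (ltac:(by rewrite le_max lexx orbT) : f (y + s *: d) <= M) s0.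
  by rewrite scalerN addrK le_max [X in _ || X]leNgt down orbF.
have le_xy : f (x + t *: d) <= f (y + s *: d).
  pose M := Num.min (f (x + t *: d)) (f y).
  have ray tau : 0 <= tau -> M <= f (x + t *: d + tau *: d).
    move=> tau0; rewrite ge_min; apply/orP; left.
    by rewrite -addrA -scalerDl; apply: x_up; rewrite lerDl.
  have := ray_ge f_cont f_mono ray (ltac:(by rewrite ge_min lexx orbT) : M <= f y) s0.
  by rewrite ge_min [X in _ || X]leNgt down orbF.
lra.
Qed.

Lemma nonincr_dirVN d : nonincr_dir d \/ nonincr_dir (- d).
Proof.
have [nd|nd] := pselect (nonincr_dir d); [by left | right].
move=> y s s0; rewrite leNgt; apply/negP => down.
apply: nd => x t t0; rewrite leNgt; apply/negP => up.
by apply: (no_ascent_and_descent (y := y + s *: - d) t0 s0 up); rewrite scalerN subrK -scalerN.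
Qed.

Lemma nonincr_dir_invariant d : nonincr_dir d -> nonincr_dir (- d) ->
  forall x l, f (x + l *: d) = f x.
Proof.
move=> dd dN x l; apply/eqP; rewrite eq_le; case: (lerP 0 l) => l0.
- rewrite dd //=; have := dN (x + l *: d) l l0; by rewrite scalerN addrK.
- have l0' : 0 <= - l by rewrite oppr_ge0 ltW.
  have := dN x (- l) l0'; rewrite scalerN scaleNr opprK => -> /=.
  by have := dd (x + l *: d) (- l) l0'; rewrite scaleNr addrK.
Qed.

Lemma nonincr_dir_lerp_closed b0 b1 sig :
  (forall e, 0 < e -> exists2 s, `|sig - s| < e & nonincr_dir (lerp b0 b1 s)) ->
  nonincr_dir (lerp b0 b1 sig).
Proof.
move=> approx x t t0.
have lineE s : x + t *: lerp b0 b1 s = x + t *: b0 + s *: (t *: (b1 - b0)).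
  by apply/rowP => j; rewrite !mxE; ring.
rewrite lineE; apply: (le_of_approx_le (h := fun s => f (x + t *: b0 + s *: (t *: (b1 - b0))))).
  exact: line_continuous.
by move=> e e0; have [s ss Ns] := approx e e0; exists s; rewrite // -lineE; apply: Ns.
Qed.

Lemma exists_invariant_lerp b0 b1 : nonincr_dir b0 -> nonincr_dir (- b1) ->
  exists2 s, 0 <= s <= 1 & nonincr_dir (lerp b0 b1 s) /\ nonincr_dir (- lerp b0 b1 s).
Proof.
(* sup S is approached from below by directions along which f is
   nonincreasing and, by nonincr_dirVN, from above by directions along which
   f is nondecreasing. *)
move=> N0 N1.
pose S := [set s : R | 0 <= s <= 1 /\ nonincr_dir (lerp b0 b1 s)].
have S0 : S 0 by split; [rewrite lexx ler01 | rewrite /lerp subr0 scale1r scale0r addr0].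
have supS : has_sup S by split; [exists 0 | exists 1 => s [/andP [_ ->]]].
pose sig := sup S.
have sig0 : 0 <= sig := sup_upper_bound supS S0.
have sig1 : sig <= 1 by apply: ge_sup; [exists 0 | move=> s [/andP [_ ->]]].
exists sig; first by rewrite sig0 sig1.
split.
- apply: nonincr_dir_lerp_closed => e e0.
  have [s Ss hs] := sup_adherent e0 supS.
  have ssig : s <= sig := sup_upper_bound supS Ss.
  move: hs; rewrite -/sig => hs.
  by exists s; [rewrite ger0_norm ?subr_ge0 //; lra | case: Ss].
- rewrite lerpN; apply: nonincr_dir_lerp_closed => e e0.
  case: (lerP (sig + e / 2) 1) => sig_e.
  + exists (sig + e / 2); first by rewrite opprD addNKr normrN gtr0_norm; lra.
    rewrite -lerpN; case: (nonincr_dirVN (lerp b0 b1 (sig + e / 2))) => // Ns.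
    have : sig + e / 2 <= sig by apply: sup_upper_bound => //; split => //; apply/andP; split; lra.
    lra.
  + exists 1; first by rewrite ler0_norm ?subr_le0 //; lra.
    by rewrite -lerpN /lerp subrr scale0r add0r scale1r.
Qed.

Lemma exists_invariant_dir :
  exists2 d : 'rV[R]_2, d != 0 & forall x l, f (x + l *: d) = f x.
Proof.
have [b0 N0 [b00 b01]] : exists2 b0, nonincr_dir b0 & b0 0 0 != 0 /\ b0 0 1 = 0.
  by case: (nonincr_dirVN (e2 R 0)) => N; [exists (e2 R 0) | exists (- e2 R 0)];
    rewrite // !mxE /= ?oppr_eq0 ?oner_eq0 ?oppr0.
have [b1 N1 [b10 b11]] : exists2 b1, nonincr_dir (- b1) & b1 0 0 = 0 /\ b1 0 1 != 0.
  by case: (nonincr_dirVN (e2 R 1)) => N; [exists (- e2 R 1) | exists (e2 R 1)];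
    rewrite ?opprK // !mxE /= ?oppr_eq0 ?oner_eq0 ?oppr0.
have [s _ [Nd NNd]] := exists_invariant_lerp N0 N1.
exists (lerp b0 b1 s); last exact: nonincr_dir_invariant.
apply/negP => /eqP /rowP lerp0; move: (lerp0 0) (lerp0 1).
rewrite !mxE b01 b10 !mulr0 addr0 add0r => /eqP + /eqP.
rewrite !mulf_eq0 (negbTE b00) (negbTE b11) !orbF subr_eq0 => /eqP <- /eqP.
exact/eqP/oner_neq0.
Qed.
End InvariantDirection.

Lemma exists_independent (d : 'rV[R]_2) : d != 0 ->
  exists2 u : 'rV[R]_2, u != 0 & forall a b, a *: u + b *: d = 0 -> a = 0 /\ b = 0.
Proof.
move=> dn0; have [d1|d1] := eqVneq (d 0 1) 0.
- have d0 : d 0 0 != 0.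
    apply: contra dn0 => /eqP d0; apply/eqP/rowP => -[[|[|//]] j2]; rewrite mxE.
    + by rewrite -d0; congr (d 0 _); apply: val_inj.
    + by rewrite -d1; congr (d 0 _); apply: val_inj.
  exists (e2 R 1); first by apply/eqP => /rowP /(_ 1); rewrite !mxE /= => /eqP; rewrite oner_eq0.
  move=> a b /rowP abd; move: (abd 0) (abd 1); rewrite !mxE /= d1 !mulr0 mulr1 add0r addr0.
  by move=> /eqP; rewrite mulf_eq0 (negbTE d0) orbF => /eqP.
- exists (e2 R 0); first by apply/eqP => /rowP /(_ 0); rewrite !mxE /= => /eqP; rewrite oner_eq0.
  move=> a b /rowP abd; move: (abd 0) (abd 1); rewrite !mxE /= mulr0 mulr1 add0r.
  move=> + /eqP; rewrite mulf_eq0 (negbTE d1) orbF => + /eqP b0.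
  by rewrite b0 mul0r addr0.
Qed.
End MonotoneOnLines.

Theorem theorem1 (R : realType) (f : 'rV[R]_2 -> R) :
  IRHS (graph f) ->
  exists u v : 'rV[R]_2,
    [/\ u != 0, v != 0,
        (forall a b : R, a *: u + b *: v = 0 -> a = 0 /\ b = 0) &
        forall mu lam : R, f (mu *: u + lam *: v) = f (mu *: u)].
Proof.
move=> irhs; have [_ hs _] := irhs.
have [v vn0 inv] := exists_invariant_dir (smooth_hypersurface_graph_continuous hs)
  (IRHS_monotonic irhs).
have [u un0 indep] := exists_independent vn0.
by exists u, v; split=> // mu lam; exact: inv.
Qed.
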